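(* Let $X$ be a separated metric compact Hausdorff space with metric $d$, and let $\gamma$ be a binary continuous submetric on $X$. Then $\gamma$ is an equivalence continuous submetric if and only if for all $x,y\in X$ and $i,j\in\{0,1\}$, $$d(x,y)\le\gamma((x,i),(y,j))=\gamma((x,1-i),(y,1-j))$$ and $$\gamma((x,i),(y,1-i))=\inf_{z\in X}\big(\gamma((x,i),(z,1-i))+\gamma((z,i),(y,1-i))\big).$$
   Context: A metric on a set $X$ is a map $d\colon X\times X\to[0,\infty]$ with $d(x,x)=0$ and $d(x,z)\le d(x,y)+d(y,z)$ (not necessarily symmetric, $\infty$ allowed); separated means $d(x,y)=0=d(y,x)$ implies $x=y$. A separated metric compact Hausdorff space is a compact Hausdorff space with a separated metric continuous $X\times X\to[0,\infty]$ for the upper topology on $[0,\infty]$ (open sets $]u,\infty]$); $\mathbf{MetCH_{sep}}$ is the category of these with continuous non-expansive maps. $X+X$ is the coproduct, with elements written $(x,i)$, $x\in X$, $i\in\{0,1\}$, coproduct topology and metric $d((x,i),(y,i))=d(x,y)$, $d((x,i),(y,1-i))=\infty$. A binary continuous submetric on $X$ is a (not necessarily separated) metric $\gamma$ on $X+X$, continuous for the upper topology, with $\gamma$ below the coproduct metric. Its associated binary corelation is $\binom{q_0}{q_1}\colon X+X\to S:=(X+X)/{\sim_\gamma}$, where $u\sim_\gamma v$ iff $\gamma(u,v)=\gamma(v,u)=0$, $S$ has quotient topology and metric $([u],[v])\mapsto\gamma(u,v)$, and $q_i(x)=[(x,i)]$. The corelation is reflexive if there is a morphism $e\colon S\to X$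 with $e q_0=e q_1=1_X$; symmetric if there is $s\colon S\to S$ with $s q_0=q_1$, $s q_1=q_0$; transitive if, with $\lambda_0,\lambda_1\colon S\to P$ the pushout of $q_1$ and $q_0$ (so $\lambda_0 q_1=\lambda_1 q_0$), there is $t\colon S\to P$ with $t q_0=\lambda_0 q_0$, $t q_1=\lambda_1 q_1$. $\gamma$ is an equivalence continuous submetric if its corelation is reflexive, symmetric and transitive. *)

From HB Require Import structures.
From mathcomp Require Import all_boot all_order all_algebra.
From mathcomp Require Import all_classical all_reals all_analysis.
From mathcomp Require Import generic_quotient.
Local Open Scope quotient_scope.
Set Implicit Arguments. Unset Strict Implicit. Unset Printing Implicit Defensive.
Import Order.TTheory GRing.Theory Num.Theory.
Local Open Scope classical_set_scope.
Local Open Scope ring_scope.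
Local Open Scope ereal_scope.

Section Defs.
Context {R : realType}.

Definition is_metric (T : Type) (d : T -> T -> \bar R) : Prop :=
  [/\ forall x, d x x = 0,
      forall x y z, d x z <= d x y + d y z &
      forall x y, 0 <= d x y].

Definition separated (T : Type) (d : T -> T -> \bar R) : Prop :=
  forall x y, d x y = 0 -> d y x = 0 -> x = y.

Definition upper_continuous (T : topologicalType) (d : T -> T -> \bar R) : Prop :=
  forall u : R, open [set p : T * T | u%:E < d p.1 p.2].
End Defs.

Record MetCH (R : realType) := MkMetCH {
  mc_sort :> topologicalType;
  mc_d : mc_sort -> mc_sort -> \bar R;
  mc_compact : compact [set: mc_sort];
  mc_hausdorff : hausdorff_space mc_sort;
  mc_is_metric : is_metric mc_d;
  mc_separated : separated mc_d;
  mc_continuous : upper_continuous mc_d }.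
Arguments mc_d {R} m _ _.

Definition is_mor {R : realType} (T1 T2 : topologicalType)
  (d1 : T1 -> T1 -> \bar R) (d2 : T2 -> T2 -> \bar R) (f : T1 -> T2) : Prop :=
  continuous f /\ forall x y, d2 (f x) (f y) <= d1 x y.

Definition cop (X : topologicalType) : topologicalType :=
  {i : bool & (fun _ : bool => X) i}.

Definition cop_d {R : realType} (X : MetCH R) (u v : cop (mc_sort X)) : \bar R :=
  if tag u == tag v then mc_d X (projT2 u) (projT2 v) else +oo.


Record bin_submetric (R : realType) (X : MetCH R) := MkBinSubmetric {
  bs_g :> cop (mc_sort X) -> cop (mc_sort X) -> \bar R;
  bs_is_metric : is_metric bs_g;
  bs_continuous : upper_continuous bs_g;
  bs_below : forall u v, bs_g u v <= cop_d u v }.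

Section Corelation.
Context {R : realType} (X : MetCH R) (g : bin_submetric X).

Definition sim_g (u v : cop (mc_sort X)) : bool := (g u v == 0) && (g v u == 0).

Lemma sim_g_refl : reflexive sim_g.
Proof. by move=> u; rewrite /sim_g; case: (bs_is_metric g) => -> _ _; rewrite eqxx. Qed.

Lemma sim_g_sym : symmetric sim_g.
Proof. by move=> u v; rewrite /sim_g andbC. Qed.

Lemma sim_g_trans : transitive sim_g.
Proof.
have [_ tr ge0] := bs_is_metric g.
have H a b c : g a b = 0 -> g b c = 0 -> g a c = 0.
  move=> ab bc; apply/eqP; rewrite eq_le ge0 andbT.
  by have := tr a b c; rewrite ab bc adde0.
move=> v u w /andP[/eqP uv /eqP vu] /andP[/eqP vw /eqP wv].
by rewrite /sim_g (H _ _ _ uv vw) (H _ _ _ wv vu) eqxx.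
Qed.

Definition sim_g_equiv := EquivRel sim_g sim_g_refl sim_g_sym sim_g_trans.

(** The codomain S := (X + X)/~_g of the associated corelation,
    with the quotient topology ... *)
Definition corel_S : topologicalType :=
  quotient_topology {eq_quot sim_g_equiv}.

(** ... and the metric ([u],[v]) |-> g(u,v) (independent of representatives). *)
Definition corel_d (a b : corel_S) : \bar R := g (repr a) (repr b).

Definition corel_q (i : bool) (x : mc_sort X) : corel_S :=
  \pi_{eq_quot sim_g_equiv} (existT (fun _ : bool => mc_sort X) i x).

End Corelation.
Arguments corel_d {R X} g _ _.
Arguments corel_q {R X} g i x.

Section Properties.
Context {R : realType} (X : MetCH R) (g : bin_submetric X).
Local Notation S := (corel_S g).
Local Notation dS := (corel_d g).
Local Notation q0 := (corel_q g false).
Local Notation q1 := (corel_q g true).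

Definition corel_reflexive : Prop :=
  exists e : S -> mc_sort X, is_mor dS (mc_d X) e /\
    forall x, e (q0 x) = x /\ e (q1 x) = x.

Definition corel_symmetric : Prop :=
  exists s : S -> S, is_mor dS dS s /\
    forall x, s (q0 x) = q1 x /\ s (q1 x) = q0 x.

Definition is_pushout (P : MetCH R) (l0 l1 : S -> mc_sort P) : Prop :=
  [/\ is_mor dS (mc_d P) l0, is_mor dS (mc_d P) l1,
      (forall x, l0 (q1 x) = l1 (q0 x)) &
      forall (Y : MetCH R) (f0 f1 : S -> mc_sort Y),
        is_mor dS (mc_d Y) f0 -> is_mor dS (mc_d Y) f1 ->
        (forall x, f0 (q1 x) = f1 (q0 x)) ->
        exists h : mc_sort P -> mc_sort Y,
          [/\ is_mor (mc_d P) (mc_d Y) h,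
              (forall a, h (l0 a) = f0 a), (forall a, h (l1 a) = f1 a) &
              forall h' : mc_sort P -> mc_sort Y, is_mor (mc_d P) (mc_d Y) h' ->
                (forall a, h' (l0 a) = f0 a) -> (forall a, h' (l1 a) = f1 a) ->
                h' = h]].

Definition corel_transitive : Prop :=
  exists (P : MetCH R) (l0 l1 : S -> mc_sort P), is_pushout l0 l1 /\
    exists t : S -> mc_sort P, is_mor dS (mc_d P) t /\
      forall x, t (q0 x) = l0 (q0 x) /\ t (q1 x) = l1 (q1 x).

Definition equivalence_submetric : Prop :=
  [/\ corel_reflexive, corel_symmetric & corel_transitive].
End Properties.
Arguments corel_reflexive {R X} g.
Arguments corel_symmetric {R X} g.
Arguments is_pushout {R X} g P l0 l1.
Arguments corel_transitive {R X} g.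
Arguments equivalence_submetric {R X} g.

Definition cpt {X : topologicalType} (x : X) (i : bool) : cop X :=
  existT (fun _ : bool => X) i x.

(* Collapsing and swapping the two copies of X induce morphisms out of S exactly when g
   dominates d and is invariant under the swap.  For such g the pushout of q1 and q0 is the
   Kolmogorov quotient of three copies X_0, X_1, X_2 of X, where g gives the distances within
   X_0 + X_1 and within X_1 + X_2, and the distance from X_0 to X_2 is the composite
   inf_z g((x,0),(z,1)) + g((z,0),(y,1)); it is upper continuous because X is compact.
   Comparing a transitivity map with this explicit pushout through the universal property
   shows that g((x,0),(y,1)) is at least the composite, and when the two agree the
   embedding of X + X onto X_0 + X_2 is a transitivity map.  The reverse inequality is the
   triangle inequality through (z,1), since g((z,1),(y,1)) <= d(z,y) <= g((z,0),(y,1)). *)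

From Pilot Require Import Defs.
From HB Require Import structures.
From mathcomp Require Import all_boot all_order all_algebra.
From mathcomp Require Import all_classical all_reals all_analysis.
From mathcomp Require Import generic_quotient lra.
Set Implicit Arguments. Unset Strict Implicit. Unset Printing Implicit Defensive.
Import Order.TTheory GRing.Theory Num.Theory.
Local Open Scope classical_set_scope.
Local Open Scope ring_scope.
Local Open Scope ereal_scope.
Local Open Scope quotient_scope.

Section ExtendedReals.
Context {R : realType}.

Lemma lte_EFin_between (c : R) (e : \bar R) :
  c%:E < e -> exists2 v : R, (c < v)%R & v%:E < e.
Proof.
case: e => [r| |] //= ce; last by exists (c + 1)%R; [lra | exact: ltry].
by exists ((c + r) / 2)%R; move: ce; rewrite !lte_fin => ?; lra.
Qed.

Lemma lte_adde_split (v : R) (a b : \bar R) : 0 <= a -> 0 <= b -> v%:E < a + b ->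
  exists a' b' : R, [/\ a'%:E < a, b'%:E < b & (a' + b')%R = v].
Proof.
case: a => [r| |]; case: b => [s| |] //= _ _.
- rewrite -EFinD lte_fin => vrs.
  exists (r - (r + s - v) / 2)%R, (s - (r + s - v) / 2)%R.
  by rewrite !lte_fin; split; lra.
- by move=> _; exists (r - 1)%R, (v - r + 1)%R; rewrite lte_fin ltry; split => //; lra.
- by move=> _; exists (v - s + 1)%R, (s - 1)%R; rewrite lte_fin ltry; split => //; lra.
- by move=> _; exists v, 0%R; rewrite !ltry; split => //; lra.
Qed.

Lemma le_adde_ereal_inf (T : Type) (a c : \bar R) (f : T -> \bar R) :
  0 <= a -> (forall z, 0 <= f z) -> (forall z, c <= a + f z) ->
  c <= a + ereal_inf (range f).
Proof.
move=> a0 f0 cf; have inf0 : 0 <= ereal_inf (range f).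
  by apply: le_ereal_inf_tmp => _ [z _ <-].
case: a a0 cf => [r| |] // _ cf; last by rewrite addye ?leey // gt_eqF // (lt_le_trans ltNy0).
rewrite -leeBlDl //; apply: le_ereal_inf_tmp => _ [z _ <-].
by rewrite leeBlDl.
Qed.

End ExtendedReals.

Lemma hausdorff_prod (U V : topologicalType) :
  hausdorff_space U -> hausdorff_space V -> hausdorff_space (U * V)%type.
Proof.
move=> hU hV [p1 p2] [q1 q2] cl; congr pair; [apply: hU | apply: hV] => A B nA nB.
- have nAT : nbhs (p1, p2) (A `*` setT) by exists (A, setT) => //; split => //; exact: filterT.
  have nBT : nbhs (q1, q2) (B `*` setT) by exists (B, setT) => //; split => //; exact: filterT.
  by have [[x y] [[Ax _] [Bx _]]] := cl _ _ nAT nBT; exists x.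
- have nTA : nbhs (p1, p2) (setT `*` A) by exists (setT, A) => //; split => //; exact: filterT.
  have nTB : nbhs (q1, q2) (setT `*` B) by exists (setT, B) => //; split => //; exact: filterT.
  by have [[x y] [[_ Ay] [_ By]]] := cl _ _ nTA nTB; exists y.
Qed.

Lemma fst_continuous (U V : topologicalType) : continuous (@fst U V).
Proof. by move=> p; exact: cvg_fst. Qed.

Lemma snd_continuous (U V : topologicalType) : continuous (@snd U V).
Proof. by move=> p; exact: cvg_snd. Qed.

Lemma continuous_pair (U V W : topologicalType) (f : U -> V) (h : U -> W) :
  continuous f -> continuous h -> continuous (fun u => (f u, h u)).
Proof.
by move=> fc hc u; apply: (@cvg_pair _ _ _ _ (nbhs (f u)) (nbhs (h u))); [exact: fc | exact: hc].
Qed.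

Lemma sigT_fun_continuous (I : choiceType) (Y Z : topologicalType) (f : I -> Y -> Z) :
  (forall i, continuous (f i)) ->
  continuous (fun u : {i : I & (fun=> Y) i} => f (projT1 u) (projT2 u)).
Proof.
move=> fc; have -> : (fun u : {i : I & (fun=> Y) i} => f (projT1 u) (projT2 u)) =
  unstable.sigT_fun f by apply/funext => -[].
exact: sigT_continuous.
Qed.

Section LowerSemicontinuity.
Context {R : realType}.

Lemma upper_continuousP (T : topologicalType) (d : T -> T -> \bar R) :
  upper_continuous d <-> lower_semicontinuous (fun p : T * T => d p.1 p.2).
Proof. by rewrite lower_semicontinuousP. Qed.

Lemma lower_semicontinuous_comp (U V : topologicalType) (h : U -> V) (f : V -> \bar R) :
  continuous h -> lower_semicontinuous f -> lower_semicontinuous (f \o h).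
Proof.
move=> hc /lower_semicontinuousP fl; apply/lower_semicontinuousP => a.
exact: (open_comp (fun u _ => hc u) (fl a)).
Qed.

Lemma lower_semicontinuousD (U : topologicalType) (f h : U -> \bar R) :
  (forall u, 0 <= f u) -> (forall u, 0 <= h u) ->
  lower_semicontinuous f -> lower_semicontinuous h -> lower_semicontinuous (f \+ h).
Proof.
move=> f0 h0 fl hl u a /(lte_adde_split (f0 u) (h0 u)) [a' [b' [fa hb <-]]].
have [V nV Vf] := fl u a' fa; have [W nW Wh] := hl u b' hb.
exists (V `&` W); first exact: filterI.
by move=> w [/Vf fw /Wh hw]; rewrite EFinD lteD.
Qed.

Lemma lower_semicontinuous_ereal_inf (U Z : topologicalType) (f : U -> Z -> \bar R) :
  compact [set: Z] -> lower_semicontinuous (fun p : U * Z => f p.1 p.2) ->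
  lower_semicontinuous (fun u => ereal_inf (range (f u))).
Proof.
move=> Zc fl u0 c /lte_EFin_between[v cv vinf].
have near_gt z : [set: Z] z -> \forall z' \near z & u \near u0, v%:E < f u z'.
  move=> _; have vf : v%:E < f u0 z.
    by apply: (lt_le_trans vinf); apply: ereal_inf_lbound; exists z.
  have [V [[A B] [/= nA nB] AB] Vf] := fl (u0, z) v vf.
  exists (B, A) => // -[z' u] [/= Bz' Au].
  exact: (Vf (u, z') (AB (u, z') (conj Au Bz'))).
exists [set u | [set: Z] `<=` (fun z => v%:E < f u z)].
  exact: (compact_near_coveringP _).1 Zc _ _ (fun u z => v%:E < f u z) _ near_gt.
move=> u fu.
apply: (@lt_le_trans _ _ v%:E); first by rewrite lte_fin.
by apply: le_ereal_inf_tmp => _ [z _ <-]; apply/ltW/fu.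
Qed.

Lemma sigT_upper_continuous (I : choiceType) (Y : topologicalType)
    (D : I -> I -> Y -> Y -> \bar R) :
  (forall k l, lower_semicontinuous (fun p : Y * Y => D k l p.1 p.2)) ->
  upper_continuous (fun u v : {k : I & (fun=> Y) k} =>
    D (projT1 u) (projT1 v) (projT2 u) (projT2 v)).
Proof.
move=> Dl c; rewrite openE => -[[k x] [l y]] /= cD.
have [V [[A B] [/= nA nB] AB] VD] := Dl k l (x, y) c cD.
exists (existT _ k @` A, existT _ l @` B); first by split; exact: existT_nbhs.
by move=> [_ _] /= [[x' Ax' <-] [y' By' <-]]; apply: (VD (x', y')); apply: AB.
Qed.

End LowerSemicontinuity.

(** * Kolmogorov quotients *)

Section Indistinguishability.
Context {R : realType} {T : Type} (d : T -> T -> \bar R).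
Hypothesis dm : is_metric d.

Definition indist (u v : T) : bool := (d u v == 0) && (d v u == 0).

Let d_ge0 u v : 0 <= d u v. Proof. by case: dm. Qed.
Let d_triangle u v w : d u w <= d u v + d v w. Proof. by case: dm. Qed.

Lemma indist_refl : reflexive indist.
Proof. by move=> u; rewrite /indist; case: dm => -> _ _; rewrite eqxx. Qed.

Lemma indist_sym : symmetric indist.
Proof. by move=> u v; rewrite /indist andbC. Qed.

Lemma indist_trans : transitive indist.
Proof.
have d0 u v w : d u v = 0 -> d v w = 0 -> d u w = 0.
  move=> uv vw; apply/eqP; rewrite eq_le d_ge0 andbT.
  by have := d_triangle u v w; rewrite uv vw adde0.
move=> v u w /andP[/eqP uv /eqP vu] /andP[/eqP vw /eqP wv].
by rewrite /indist (d0 _ _ _ uv vw) (d0 _ _ _ wv vu) eqxx.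
Qed.

Definition indist_equiv := EquivRel indist indist_refl indist_sym indist_trans.

Lemma indist_equivE : indist_equiv =2 indist.
Proof. by []. Qed.

Lemma indist_distl u u' v : indist u u' -> d u v = d u' v.
Proof.
move=> /andP[/eqP uu' /eqP u'u]; apply/eqP; rewrite eq_le.
by have := d_triangle u u' v; have := d_triangle u' u v; rewrite uu' u'u !add0e => -> ->.
Qed.

Lemma indist_distr u v v' : indist v v' -> d u v = d u v'.
Proof.
move=> /andP[/eqP vv' /eqP v'v]; apply/eqP; rewrite eq_le.
by have := d_triangle u v v'; have := d_triangle u v' v; rewrite vv' v'v !adde0 => -> ->.
Qed.

Lemma indist_le0 u v : indist u v = (d u v <= 0) && (d v u <= 0).
Proof. by rewrite /indist !eq_le !d_ge0 !andbT. Qed.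

End Indistinguishability.

Section KolmogorovQuotient.
Context {R : realType} {T : topologicalType} (d : T -> T -> \bar R).
Hypotheses (dm : is_metric d) (e : equiv_rel T) (eE : e =2 indist d).

Definition kquot : topologicalType := quotient_topology {eq_quot e}.
Definition kq_pi (u : T) : kquot := \pi_{eq_quot e} u.
Definition kq_dist (a b : kquot) : \bar R := d (repr a) (repr b).

Lemma kq_reprK (a : kquot) : kq_pi (repr a) = a.
Proof. exact: reprK. Qed.

Lemma kq_pi_eq u v : kq_pi u = kq_pi v <-> indist d u v.
Proof.
by rewrite -eE; split => [uv|uv]; apply/(eqquotP {eq_quot e}).
Qed.

Lemma indist_repr_pi u : indist d (repr (kq_pi u)) u.
Proof. by apply/kq_pi_eq; rewrite kq_reprK. Qed.

Lemma kq_dist_pi u v : kq_dist (kq_pi u) (kq_pi v) = d u v.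
Proof.
by rewrite /kq_dist (indist_distl dm _ (indist_repr_pi u)) (indist_distr dm _ (indist_repr_pi v)).
Qed.

Lemma kq_pi_continuous : continuous kq_pi.
Proof. exact: pi_continuous. Qed.

Lemma kq_dist_metric : is_metric kq_dist.
Proof. by case: dm => d0 dtr dge0; split => *; rewrite /kq_dist. Qed.

Lemma kq_dist_separated : Defs.separated kq_dist.
Proof.
move=> a b ab ba; rewrite -(kq_reprK a) -(kq_reprK b); apply/kq_pi_eq.
by rewrite /indist -/(kq_dist a b) -/(kq_dist b a) ab ba eqxx.
Qed.

Section Lift.
Context (Y : topologicalType) (dY : Y -> Y -> \bar R) (F : T -> Y).
Hypotheses (dYm : is_metric dY) (dYs : Defs.separated dY).
Hypotheses (Fc : continuous F) (Fd : forall u v, dY (F u) (F v) <= d u v).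

Definition kq_lift (a : kquot) : Y := F (repr a).

Lemma kq_liftE u : kq_lift (kq_pi u) = F u.
Proof.
have [_ _ dY_ge0] := dYm.
have dY0 v w : indist d v w -> dY (F v) (F w) = 0.
  move=> /andP[/eqP vw _]; apply/eqP; rewrite eq_le dY_ge0 andbT -vw; exact: Fd.
have ru := indist_repr_pi u.
by apply: dYs; apply: dY0; rewrite // indist_sym.
Qed.

Lemma kq_lift_mor : is_mor kq_dist dY kq_lift.
Proof.
split=> [|a b]; last exact: Fd.
apply/quotient_continuous.
by have -> : kq_lift \o \pi_kquot = F by apply/funext => u /=; exact: kq_liftE.
Qed.

End Lift.

Hypotheses (dc : upper_continuous d) (Tc : compact [set: T]) (Th : hausdorff_space T).

Lemma closed_indist : closed [set p : T * T | indist d p.1 p.2].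
Proof.
have -> : [set p : T * T | indist d p.1 p.2] =
    ~` ([set p | 0%R%:E < d p.1 p.2] `|` (unstable.swap @^-1` [set p | 0%R%:E < d p.1 p.2])).
  apply/seteqP; split => p /=; rewrite indist_le0 //.
    by move=> /andP[uv vu] [] /=; rewrite ltNge ?uv ?vu.
  by move/not_orP => [] /negP; rewrite -leNgt => -> /negP; rewrite -leNgt => ->.
apply: open_closedC; apply: openU; first exact: dc.
by apply: open_comp; [move=> p _; exact: swap_continuous | exact: dc].
Qed.

Lemma closed_indist_class u : closed [set w | indist d u w].
Proof.
have -> : [set w | indist d u w] = pair u @^-1` [set p | indist d p.1 p.2] by [].
apply: preimage_closed; last exact: closed_indist.
move=> w _; apply: (@continuous_pair _ _ _ (fun=> u) id) => ?; [exact: cvg_cst | exact: cvg_id].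
Qed.

Lemma closed_indist_saturation (A : set T) :
  closed A -> closed [set w | exists2 w', A w' & indist d w w'].
Proof.
move=> Ac; have -> : [set w | exists2 w', A w' & indist d w w'] =
    fst @` ([set p | indist d p.1 p.2] `&` (snd @^-1` A)).
  apply/seteqP; split => [w [w' Aw' ww']|_ [[w w'] [/= ww' Aw'] <-]].
    by exists (w, w').
  by exists w'.
apply: compact_closed => //; apply: continuous_compact.
  exact/continuous_subspaceT/fst_continuous.
apply: (subclosed_compact _ (compact_setX Tc Tc)) => //.
apply: closedI; first exact: closed_indist.
by apply: preimage_closed => // p _; exact: snd_continuous.
Qed.

Lemma kq_compact : compact [set: kquot].
Proof.
have -> : [set: kquot] = kq_pi @` [set: T].
  by apply/seteqP; split => // a _; exists (repr a) => //; rewrite kq_reprK.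
by apply: continuous_compact => //; exact/continuous_subspaceT/kq_pi_continuous.
Qed.

Definition indist_kernel (W : set T) := [set w | forall w', indist d w w' -> W w'].

Lemma open_indist_kernel W : open W -> open (indist_kernel W).
Proof.
move=> Wo; have -> : indist_kernel W = ~` [set w | exists2 w', (~` W) w' & indist d w w'].
  apply/seteqP; split => w /=; first by move=> Ww [w' nWw' ww']; exact/nWw'/Ww.
  by move=> Ww w' ww'; apply/not_notP => nWw'; apply: Ww; exists w'.
exact/closed_openC/closed_indist_saturation/open_closedC.
Qed.

Lemma open_kq_pi_kernel W : open W -> open (kq_pi @` indist_kernel W : set kquot).
Proof.
move=> Wo; have : open (kq_pi @^-1` (kq_pi @` indist_kernel W)); last by [].
suff -> : kq_pi @^-1` (kq_pi @` indist_kernel W) = indist_kernel W by exact: open_indist_kernel.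
apply/seteqP; split => w /=; last by move=> Ww; exists w.
move=> [w' Kw' /kq_pi_eq w'w] w'' ww''; apply: (Kw' w'').
exact: (indist_trans dm w'w ww'').
Qed.

(* Indistinguishability classes are closed, so normality separates two of them; the largest
   saturated subsets of the separating open sets are open and project to open sets. *)
Lemma kq_hausdorff : hausdorff_space kquot.
Proof.
rewrite open_hausdorff => a b ab.
set u := repr a; set v := repr b.
have uv : ~~ indist d u v.
  by apply: contra_neqN ab => uv; rewrite -(kq_reprK a) -(kq_reprK b); apply/kq_pi_eq.
pose Cu := [set w | indist d u w]; pose Cv := [set w | indist d v w].
have CuCv : Cu `<=` ~` Cv.
  move=> w /= uw vw; move/negP: uv; apply.
  by rewrite (indist_trans dm uw) // indist_sym.
have CuCv_nbhs : set_nbhs Cu (~` Cv).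
  apply/set_nbhsP; exists (~` Cv); split => //.
  exact/closed_openC/closed_indist_class.
have [C nC cC] := @compact_normal _ Th Tc Cu (@closed_indist_class u) _ CuCv_nbhs.
pose U := interior C; pose V := ~` closure C.
exists (kq_pi @` indist_kernel U, kq_pi @` indist_kernel V) => /=.
  split; rewrite inE.
    by exists u; [move=> w uw; exact: nC | exact: kq_reprK].
  by exists v; [move=> w vw /cC; apply | exact: kq_reprK].
split; [exact/open_kq_pi_kernel/open_interior |
        exact/open_kq_pi_kernel/closed_openC/closed_closure |].
apply/eqP/seteqP; split => // x [[w1 Uw1 <-] [w2 Vw2 /kq_pi_eq w2w1]].
apply: (Vw2 w1 w2w1).
by apply: subset_closure; apply: interior_subset; exact: (Uw1 w1 (indist_refl dm w1)).
Qed.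

Lemma kq_dist_upper_continuous : upper_continuous kq_dist.
Proof.
move=> c; pose pi2 p := (kq_pi p.1, kq_pi p.2).
have -> : [set p : kquot * kquot | c%:E < kq_dist p.1 p.2] =
    ~` (pi2 @` [set p : T * T | d p.1 p.2 <= c%:E]).
  apply/seteqP; split => [[a b] /= cab [[u v] /= uvc [ua vb]]|[a b] /= nimg].
    by move: cab; rewrite -ua -vb kq_dist_pi ltNge uvc.
  rewrite ltNge; apply/negP => abc; apply: nimg; exists (repr a, repr b) => //=.
  by rewrite /pi2 /= !kq_reprK.
apply: closed_openC; apply: compact_closed; first exact: hausdorff_prod kq_hausdorff kq_hausdorff.
apply: continuous_compact.
  apply/continuous_subspaceT/continuous_pair => p;
  by apply: cvg_comp;
    first [exact: fst_continuous | exact: snd_continuous | exact: kq_pi_continuous].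
apply: (subclosed_compact _ (compact_setX Tc Tc)) => //.
have -> : [set p : T * T | d p.1 p.2 <= c%:E] = ~` [set p | c%:E < d p.1 p.2].
  by apply/seteqP; split => p /=; rewrite leNgt => /negP.
exact/open_closedC/dc.
Qed.

Definition kq_MetCH : MetCH R := MkMetCH kq_compact kq_hausdorff kq_dist_metric
  kq_dist_separated kq_dist_upper_continuous.

End KolmogorovQuotient.

Section Corelation.
Context {R : realType} (X : MetCH R) (g : bin_submetric X).

Lemma sim_gE : sim_g_equiv g =2 indist g.
Proof. by []. Qed.

Definition corel_pi (u : cop (mc_sort X)) : corel_S g := kq_pi (sim_g_equiv g) u.

Lemma corel_reprK (a : corel_S g) : corel_pi (repr a) = a.
Proof. exact: kq_reprK. Qed.

Lemma corel_qE i x : corel_q g i x = corel_pi (cpt x i).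
Proof. by []. Qed.

Lemma corel_d_pi u v : corel_d g (corel_pi u) (corel_pi v) = g u v.
Proof. exact: (kq_dist_pi (bs_is_metric g) sim_gE u v). Qed.

Lemma corel_d_q i j x y : corel_d g (corel_q g i x) (corel_q g j y) = g (cpt x i) (cpt y j).
Proof. exact: corel_d_pi. Qed.

Lemma corel_d_metric : is_metric (corel_d g).
Proof. exact: (@kq_dist_metric _ _ _ (bs_is_metric g) (sim_g_equiv g)). Qed.

Lemma corel_d_separated : Defs.separated (corel_d g).
Proof. exact: (kq_dist_separated sim_gE). Qed.

Lemma corel_q_continuous i : continuous (corel_q g i).
Proof. by move=> x; apply: cvg_comp; [exact: existT_continuous | exact: kq_pi_continuous]. Qed.

Definition corel_lift (Y : topologicalType) (F : cop (mc_sort X) -> Y) : corel_S g -> Y :=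
  kq_lift (e := sim_g_equiv g) F.

Section Lift.
Context (Y : topologicalType) (dY : Y -> Y -> \bar R) (F : cop (mc_sort X) -> Y).
Hypotheses (dYm : is_metric dY) (dYs : Defs.separated dY).
Hypotheses (Fc : continuous F) (Fd : forall u v, dY (F u) (F v) <= g u v).

Lemma corel_liftE u : corel_lift F (corel_pi u) = F u.
Proof. exact: (kq_liftE sim_gE dYm dYs Fd u). Qed.

Lemma corel_lift_mor : is_mor (corel_d g) dY (corel_lift F).
Proof. exact: (kq_lift_mor sim_gE dYm dYs Fc Fd). Qed.

End Lift.
End Corelation.
Arguments corel_lift {R X} g {Y} F.

(** * Swap invariant submetrics and the three-copy pushout *)

Section Distances.
Context {R : realType} (X : MetCH R) (g : bin_submetric X).
Implicit Types x y z : mc_sort X.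

Let g_ge0 u v : 0 <= g u v. Proof. by case: (bs_is_metric g). Qed.
Let g_triangle u v w : g u w <= g u v + g v w. Proof. by case: (bs_is_metric g). Qed.

Definition g_same x y := g (cpt x false) (cpt y false).
Definition g_adj x y := g (cpt x false) (cpt y true).
Definition g_far x y := ereal_inf (range (fun z => g_adj x z + g_adj z y)).

Lemma g_far_ge0 x y : 0 <= g_far x y.
Proof. by apply: le_ereal_inf_tmp => _ [z _ <-]; apply: adde_ge0; exact: g_ge0. Qed.

Lemma le_far_adj_adj x z y : g_far x y <= g_adj x z + g_adj z y.
Proof. by apply: ereal_inf_lbound; exists z. Qed.

Lemma adj_le_far (d_le : forall x y i j, mc_d X x y <= g (cpt x i) (cpt y j)) x y :
  g_adj x y <= g_far x y.
Proof.
apply: le_ereal_inf_tmp => _ [z _ <-].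
apply: le_trans (g_triangle _ (cpt z true) _) _; apply: leeD2l.
apply: le_trans (bs_below g (cpt z true) (cpt y true)) _.
by rewrite /cop_d /=; exact: d_le.
Qed.

Section SwapInvariant.
Hypothesis g_swap : forall x y i j, g (cpt x i) (cpt y j) = g (cpt x (~~ i)) (cpt y (~~ j)).

Lemma g_cptE x y i j : g (cpt x i) (cpt y j) = if i == j then g_same x y else g_adj x y.
Proof. by rewrite /g_same /g_adj; case: i; case: j; rewrite //= g_swap. Qed.

Lemma cross_infE :
  (forall x y i, g (cpt x i) (cpt y (~~ i)) =
     ereal_inf [set g (cpt x i) (cpt z (~~ i)) + g (cpt z i) (cpt y (~~ i)) | z in [set: mc_sort X]])
  <-> forall x y, g_adj x y = g_far x y.
Proof.
split=> [adj_far x y | adj_far x y i]; first exact: adj_far x y false.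
have -> : g (cpt x i) (cpt y (~~ i)) = g_adj x y by rewrite g_cptE; case: i.
rewrite adj_far; congr (ereal_inf (image _ _)); apply/funext => z.
by rewrite !g_cptE; case: i.
Qed.

Lemma le_same_same_same x z y : g_same x y <= g_same x z + g_same z y.
Proof. exact: g_triangle. Qed.

Lemma le_same_adj_adj x z y : g_same x y <= g_adj x z + g_adj z y.
Proof. by rewrite -[g_adj z y](g_cptE z y true false); exact: g_triangle. Qed.

Lemma le_adj_same_adj x z y : g_adj x y <= g_same x z + g_adj z y.
Proof. exact: g_triangle. Qed.

Lemma le_adj_adj_same x z y : g_adj x y <= g_adj x z + g_same z y.
Proof. by rewrite -[g_same z y](g_cptE z y true true); exact: g_triangle. Qed.

Lemma same_le_far x y : g_same x y <= g_far x y.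
Proof. by apply: le_ereal_inf_tmp => _ [z _ <-]; exact: le_same_adj_adj. Qed.

Lemma le_same_far_far x z y : g_same x y <= g_far x z + g_far z y.
Proof. by apply: le_trans (le_same_same_same x z y) _; apply: leeD; exact: same_le_far. Qed.

Lemma le_adj_far_adj x z y : g_adj x y <= g_far x z + g_adj z y.
Proof. by apply: le_trans (le_adj_same_adj x z y) _; apply: leeD2r; exact: same_le_far. Qed.

Lemma le_adj_adj_far x z y : g_adj x y <= g_adj x z + g_far z y.
Proof. by apply: le_trans (le_adj_adj_same x z y) _; apply: leeD2l; exact: same_le_far. Qed.

Lemma le_far_same_far x z y : g_far x y <= g_same x z + g_far z y.
Proof.
apply: le_adde_ereal_inf => [|w|w]; [exact: g_ge0 | apply: adde_ge0; exact: g_ge0 |].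
rewrite addeA; apply: le_trans (le_far_adj_adj x w y) _; apply: leeD2r.
exact: le_adj_same_adj.
Qed.

Lemma le_far_far_same x z y : g_far x y <= g_far x z + g_same z y.
Proof.
rewrite addeC; apply: le_adde_ereal_inf => [|w|w]; [exact: g_ge0 | apply: adde_ge0; exact: g_ge0 |].
rewrite addeCA; apply: le_trans (le_far_adj_adj x w y) _; apply: leeD2l.
by rewrite addeC; exact: le_adj_adj_same.
Qed.

End SwapInvariant.

Lemma g_cpt_lower_semicontinuous i j :
  lower_semicontinuous (fun p : mc_sort X * mc_sort X => g (cpt p.1 i) (cpt p.2 j)).
Proof.
apply: (@lower_semicontinuous_comp _ _ _ (fun p => (cpt p.1 i, cpt p.2 j)) (fun q => g q.1 q.2)).
  by apply: continuous_pair => p; apply: cvg_comp;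
    first [exact: fst_continuous | exact: snd_continuous | exact: existT_continuous].
exact/upper_continuousP/bs_continuous.
Qed.

Lemma g_far_lower_semicontinuous : lower_semicontinuous (fun p : mc_sort X * mc_sort X => g_far p.1 p.2).
Proof.
apply: (@lower_semicontinuous_ereal_inf _ _ _ (fun p z => g_adj p.1 z + g_adj z p.2)).
  exact: mc_compact.
apply: (@lower_semicontinuousD _ _ (fun q => g_adj q.1.1 q.2) (fun q => g_adj q.2 q.1.2)).
- by move=> ?; exact: g_ge0.
- by move=> ?; exact: g_ge0.
- have hc : continuous (fun q : (mc_sort X * mc_sort X) * mc_sort X => (q.1.1, q.2)).
    by apply: continuous_pair => q; apply: continuous_comp;
      first [exact: fst_continuous | exact: snd_continuous | exact: cvg_id].
  exact: (lower_semicontinuous_comp hc (@g_cpt_lower_semicontinuous false true)).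
- have hc : continuous (fun q : (mc_sort X * mc_sort X) * mc_sort X => (q.2, q.1.2)).
    by apply: continuous_pair => q; apply: continuous_comp;
      first [exact: fst_continuous | exact: snd_continuous | exact: cvg_id].
  exact: (lower_semicontinuous_comp hc (@g_cpt_lower_semicontinuous false true)).
Qed.

End Distances.

Section ThreeCopies.
Context {R : realType} (X : MetCH R) (g : bin_submetric X).
Hypothesis g_swap : forall x y i j, g (cpt x i) (cpt y j) = g (cpt x (~~ i)) (cpt y (~~ j)).

Definition copies3 : topologicalType := {k : option bool & (fun=> mc_sort X) k}.

(* The copies X_0, X_1, X_2 of X are indexed by Some false, None and Some true. *)
Definition copy3_dist (k l : option bool) : mc_sort X -> mc_sort X -> \bar R :=
  match k, l with
  | None, None => g_same g
  | Some a, Some b => if a == b then g_same g else g_far g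
  | _, _ => g_adj g
  end.

Definition dist3 (u v : copies3) : \bar R :=
  copy3_dist (projT1 u) (projT1 v) (projT2 u) (projT2 v).

Lemma dist3_metric : is_metric dist3.
Proof.
have [g0 _ g_ge0] := bs_is_metric g.
split.
- by move=> [[[]|] x]; exact: g0.
- move=> [k x] [l w] [m y]; rewrite /dist3 /=.
  by case: k => [[]|]; case: l => [[]|]; case: m => [[]|] /=;
    first [ exact: le_same_same_same | exact: le_same_adj_adj | exact: le_same_far_far
          | exact: le_adj_same_adj | exact: le_adj_adj_same | exact: le_adj_far_adj
          | exact: le_adj_adj_far | exact: le_far_adj_adj | exact: le_far_same_far
          | exact: le_far_far_same ].
- by move=> [[[]|] x] [[[]|] y]; rewrite /dist3 /=; first [exact: g_ge0 | exact: g_far_ge0].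
Qed.

Lemma dist3_upper_continuous : upper_continuous dist3.
Proof.
apply: sigT_upper_continuous => -[[]|] [[]|] /=;
  first [exact: g_cpt_lower_semicontinuous | exact: g_far_lower_semicontinuous].
Qed.

Lemma copies3_compact : compact [set: copies3].
Proof. by apply: sigT_compact => [|i]; [exact: finite_finset | exact: mc_compact]. Qed.

Lemma copies3_hausdorff : hausdorff_space copies3.
Proof. by apply: sigT_hausdorff => i; exact: mc_hausdorff. Qed.

Definition pushout3 : MetCH R := kq_MetCH dist3_metric (indist_equivE dist3_metric)
  dist3_upper_continuous copies3_compact copies3_hausdorff.

Definition pi3 (u : copies3) : mc_sort pushout3 := kq_pi (indist_equiv dist3_metric) u.

Lemma pi3_dist u v : mc_d pushout3 (pi3 u) (pi3 v) = dist3 u v.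
Proof. exact: (kq_dist_pi dist3_metric (indist_equivE dist3_metric) u v). Qed.

Lemma pi3_reprK (p : mc_sort pushout3) : pi3 (repr p) = p.
Proof. exact: kq_reprK. Qed.

Definition copy3_emb (k : bool -> option bool) (u : cop (mc_sort X)) : copies3 :=
  existT _ (k (projT1 u)) (projT2 u).

Lemma copy3_emb_continuous k : continuous (copy3_emb k).
Proof.
exact: (@sigT_fun_continuous _ _ _ (fun i => existT (fun=> mc_sort X) (k i))
  (fun i => existT_continuous (k i))).
Qed.

Definition emb_left (i : bool) : option bool := if i then None else Some false.
Definition emb_right (i : bool) : option bool := if i then Some true else None.
Definition emb_outer (i : bool) : option bool := Some i.

Lemma dist3_emb_left u v : dist3 (copy3_emb emb_left u) (copy3_emb emb_left v) = g u v.
Proof. by case: u v => [i x] [j y]; rewrite g_cptE //; case: i; case: j. Qed.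

Lemma dist3_emb_right u v : dist3 (copy3_emb emb_right u) (copy3_emb emb_right v) = g u v.
Proof. by case: u v => [i x] [j y]; rewrite g_cptE //; case: i; case: j. Qed.

Lemma dist3_emb_outer (adj_far : forall x y, g_adj g x y = g_far g x y) u v :
  dist3 (copy3_emb emb_outer u) (copy3_emb emb_outer v) = g u v.
Proof. by case: u v => [i x] [j y]; rewrite g_cptE //; case: i; case: j => /=. Qed.

Section Embedding.
Variable k : bool -> option bool.
Hypothesis k_isometric : forall u v, dist3 (copy3_emb k u) (copy3_emb k v) = g u v.

Definition copy3_map : corel_S g -> mc_sort pushout3 := corel_lift g (pi3 \o copy3_emb k).

Lemma copy3_mapE u : copy3_map (corel_pi g u) = pi3 (copy3_emb k u).
Proof.
apply: corel_liftE; [exact: mc_is_metric | exact: mc_separated |].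
by move=> v w; rewrite -k_isometric -pi3_dist.
Qed.

Lemma copy3_map_mor : is_mor (corel_d g) (mc_d pushout3) copy3_map.
Proof.
apply: corel_lift_mor; [exact: mc_is_metric | exact: mc_separated | |].
- move=> u; apply: continuous_comp; last exact: kq_pi_continuous.
  exact: copy3_emb_continuous.
- by move=> v w; rewrite -k_isometric -pi3_dist.
Qed.

End Embedding.

Lemma copy3_map_leftE u : copy3_map emb_left (corel_pi g u) = pi3 (copy3_emb emb_left u).
Proof. exact: copy3_mapE dist3_emb_left u. Qed.

Lemma copy3_map_rightE u : copy3_map emb_right (corel_pi g u) = pi3 (copy3_emb emb_right u).
Proof. exact: copy3_mapE dist3_emb_right u. Qed.

End ThreeCopies.

Section Pushout.
Context {R : realType} (X : MetCH R) (g : bin_submetric X).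
Hypothesis g_swap : forall x y i j, g (cpt x i) (cpt y j) = g (cpt x (~~ i)) (cpt y (~~ j)).

Local Notation P := (pushout3 g_swap).
Local Notation l0 := (copy3_map g_swap emb_left).
Local Notation l1 := (copy3_map g_swap emb_right).

Lemma pushout3_glue x : l0 (corel_q g true x) = l1 (corel_q g false x).
Proof.
by rewrite !corel_qE (copy3_map_leftE g_swap) (copy3_map_rightE g_swap).
Qed.

Lemma pushout3_dist x y :
  mc_d P (l0 (corel_q g false x)) (l1 (corel_q g true y)) = g_far g x y.
Proof.
by rewrite !corel_qE (copy3_map_leftE g_swap) (copy3_map_rightE g_swap)
  pi3_dist.
Qed.

Section Copairing.
Variables (Y : MetCH R) (f0 f1 : corel_S g -> mc_sort Y).
Hypotheses (f0m : is_mor (corel_d g) (mc_d Y) f0) (f1m : is_mor (corel_d g) (mc_d Y) f1).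
Hypothesis f01 : forall x, f0 (corel_q g true x) = f1 (corel_q g false x).

Definition copair3_at (k : option bool) (x : mc_sort X) : mc_sort Y :=
  match k with
  | Some false => f0 (corel_q g false x)
  | None => f0 (corel_q g true x)
  | Some true => f1 (corel_q g true x)
  end.

Definition copair3 (w : copies3 X) : mc_sort Y := copair3_at (projT1 w) (projT2 w).

Lemma copair3_continuous : continuous copair3.
Proof.
have [[f0c _] [f1c _]] := (f0m, f1m).
apply: sigT_fun_continuous => -[[]|] x /=; apply: continuous_comp;
  first [exact: corel_q_continuous | exact: f0c | exact: f1c].
Qed.

Lemma copair3_nonexpansive u v : mc_d Y (copair3 u) (copair3 v) <= dist3 g u v.
Proof.
have [_ dY_triangle _] := mc_is_metric Y.
have f0d i j x y : mc_d Y (f0 (corel_q g i x)) (f0 (corel_q g j y)) <= g (cpt x i) (cpt y j).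
  by rewrite -corel_d_q; exact: f0m.2.
have f1d i j x y : mc_d Y (f1 (corel_q g i x)) (f1 (corel_q g j y)) <= g (cpt x i) (cpt y j).
  by rewrite -corel_d_q; exact: f1m.2.
case: u v => [k x] [l y]; rewrite /copair3 /dist3 /=.
case: k => [[]|]; case: l => [[]|] /=.
- by apply: le_trans (f1d _ _ _ _) _; rewrite g_cptE.
- apply: le_ereal_inf_tmp => _ [z _ <-].
  apply: le_trans (dY_triangle _ (f1 (corel_q g false z)) _) _; apply: leeD.
    by apply: le_trans (f1d _ _ _ _) _; rewrite g_cptE.
  by rewrite -f01; apply: le_trans (f0d _ _ _ _) _; rewrite g_cptE.
- by rewrite f01; apply: le_trans (f1d _ _ _ _) _; rewrite g_cptE.
- apply: le_ereal_inf_tmp => _ [z _ <-].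
  apply: le_trans (dY_triangle _ (f0 (corel_q g true z)) _) _; apply: leeD.
    by apply: le_trans (f0d _ _ _ _) _; rewrite g_cptE.
  by rewrite f01; apply: le_trans (f1d _ _ _ _) _; rewrite g_cptE.
- by apply: le_trans (f0d _ _ _ _) _; rewrite g_cptE.
- by apply: le_trans (f0d _ _ _ _) _; rewrite g_cptE.
- by rewrite f01; apply: le_trans (f1d _ _ _ _) _; rewrite g_cptE.
- by apply: le_trans (f0d _ _ _ _) _; rewrite g_cptE.
- by apply: le_trans (f0d _ _ _ _) _; rewrite g_cptE.
Qed.

Definition copair (p : mc_sort P) : mc_sort Y := kq_lift copair3 p.

Lemma copairE w : copair (pi3 g_swap w) = copair3 w.
Proof.
apply: (kq_liftE (indist_equivE _)); [exact: mc_is_metric | exact: mc_separated |].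
exact: copair3_nonexpansive.
Qed.

Lemma copair_mor : is_mor (mc_d P) (mc_d Y) copair.
Proof.
apply: (kq_lift_mor (indist_equivE _)); [exact: mc_is_metric | exact: mc_separated | |].
  exact: copair3_continuous.
exact: copair3_nonexpansive.
Qed.

Lemma copair_left a : copair (l0 a) = f0 a.
Proof.
rewrite -(corel_reprK a) (copy3_map_leftE g_swap) copairE.
by case: (repr a) => -[] x.
Qed.

Lemma copair_right a : copair (l1 a) = f1 a.
Proof.
rewrite -(corel_reprK a) (copy3_map_rightE g_swap) copairE.
by case: (repr a) => -[] x //; exact: f01.
Qed.

Lemma copair_unique (h : mc_sort P -> mc_sort Y) :
  (forall a, h (l0 a) = f0 a) -> (forall a, h (l1 a) = f1 a) -> h = copair.
Proof.
move=> hl0 hl1; apply/funext => p; rewrite -(pi3_reprK p) copairE.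
case: (repr p) => -[[]|] x; rewrite /copair3 /=.
- by rewrite -hl1 corel_qE (copy3_map_rightE g_swap).
- by rewrite -hl0 corel_qE (copy3_map_leftE g_swap).
- by rewrite -hl0 corel_qE (copy3_map_leftE g_swap).
Qed.

End Copairing.

Lemma pushout3_is_pushout : is_pushout g P l0 l1.
Proof.
split; [exact: copy3_map_mor (dist3_emb_left g_swap) |
        exact: copy3_map_mor (dist3_emb_right g_swap) | exact: pushout3_glue |].
move=> Y f0 f1 f0m f1m f01; exists (copair f0 f1); split.
- exact: copair_mor.
- exact: copair_left.
- exact: copair_right.
- by move=> h _; exact: copair_unique.
Qed.

End Pushout.

(** * Reflexivity, symmetry and transitivity of the corelation *)

Section CorelationProperties.
Context {R : realType} (X : MetCH R) (g : bin_submetric X).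

Definition cop_swap (u : cop (mc_sort X)) : cop (mc_sort X) := cpt (projT2 u) (~~ projT1 u).

Lemma corel_reflexive_le :
  corel_reflexive g -> forall x y i j, mc_d X x y <= g (cpt x i) (cpt y j).
Proof.
move=> [e [[_ e_ne] eq]] x y i j.
have eqi z k : e (corel_q g k z) = z by case: k; [exact: (eq z).2 | exact: (eq z).1].
by have := e_ne (corel_q g i x) (corel_q g j y); rewrite !eqi corel_d_q.
Qed.

Lemma corel_reflexive_of_le :
  (forall x y i j, mc_d X x y <= g (cpt x i) (cpt y j)) -> corel_reflexive g.
Proof.
move=> d_le; have [dXm dXs] := (@mc_is_metric _ X, @mc_separated _ X).
have p2c : continuous (fun u : cop (mc_sort X) => projT2 u).
  by apply: (@sigT_fun_continuous _ _ _ (fun _ (x : mc_sort X) => x)) => i x; exact: cvg_id.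
have p2d u v : mc_d X (projT2 u) (projT2 v) <= g u v by case: u v => [i x] [j y]; exact: d_le.
exists (corel_lift g (fun u => projT2 u)); split; first exact: corel_lift_mor.
by move=> x; rewrite !corel_qE !(corel_liftE dXm dXs p2d).
Qed.

Lemma corel_symmetric_swap : corel_symmetric g ->
  forall x y i j, g (cpt x i) (cpt y j) = g (cpt x (~~ i)) (cpt y (~~ j)).
Proof.
move=> [s [[_ s_ne] sE]].
have sq z k : s (corel_q g k z) = corel_q g (~~ k) z.
  by case: k; [exact: (sE z).2 | exact: (sE z).1].
have swap_le x y i j : g (cpt x (~~ i)) (cpt y (~~ j)) <= g (cpt x i) (cpt y j).
  by have := s_ne (corel_q g i x) (corel_q g j y); rewrite !sq !corel_d_q.
move=> x y i j; apply: le_anti; rewrite swap_le andbT.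
by have := swap_le x y (~~ i) (~~ j); rewrite !negbK.
Qed.

Lemma corel_symmetric_of_swap :
  (forall x y i j, g (cpt x i) (cpt y j) = g (cpt x (~~ i)) (cpt y (~~ j))) ->
  corel_symmetric g.
Proof.
move=> g_swap; have [dSm dSs] := (@corel_d_metric _ _ g, @corel_d_separated _ _ g).
have swap_c : continuous (corel_pi g \o cop_swap).
  move=> u; apply: continuous_comp; last exact: kq_pi_continuous.
  exact: (@sigT_fun_continuous _ _ _ (fun i => existT (fun=> mc_sort X) (~~ i))
    (fun i => existT_continuous (~~ i)) u).
have swap_d u v : corel_d g ((corel_pi g \o cop_swap) u) ((corel_pi g \o cop_swap) v) <= g u v.
  by case: u v => [i x] [j y]; rewrite /= corel_d_pi -g_swap.
exists (corel_lift g (corel_pi g \o cop_swap)); split; first exact: corel_lift_mor.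
by move=> x; rewrite !corel_qE !(corel_liftE dSm dSs swap_d).
Qed.

Lemma far_le_adj_of_transitive
    (g_swap : forall x y i j, g (cpt x i) (cpt y j) = g (cpt x (~~ i)) (cpt y (~~ j))) :
  corel_transitive g -> forall x y, g_far g x y <= g_adj g x y.
Proof.
move=> [P [l0 [l1 [[_ _ _ univ] [t [[_ t_ne] tE]]]]]] x y.
have [l0'm l1'm glue _] := pushout3_is_pushout g_swap.
have [h [[_ h_ne] hl0 hl1 _]] := univ _ _ _ l0'm l1'm glue.
rewrite -pushout3_dist -hl0 -hl1 -(tE x).1 -(tE y).2.
apply: le_trans (h_ne _ _) _; apply: le_trans (t_ne _ _) _.
by rewrite corel_d_q.
Qed.

Lemma corel_transitive_of_adj_far
    (g_swap : forall x y i j, g (cpt x i) (cpt y j) = g (cpt x (~~ i)) (cpt y (~~ j))) :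
  (forall x y, g_adj g x y = g_far g x y) -> corel_transitive g.
Proof.
move=> adj_far; exists (pushout3 g_swap), (copy3_map g_swap emb_left), (copy3_map g_swap emb_right).
split; first exact: pushout3_is_pushout.
have outer_iso := dist3_emb_outer g_swap adj_far.
exists (copy3_map g_swap emb_outer); split; first exact: copy3_map_mor outer_iso.
move=> x; rewrite !corel_qE !(copy3_mapE g_swap outer_iso).
by rewrite (copy3_map_leftE g_swap) (copy3_map_rightE g_swap).
Qed.

End CorelationProperties.

Theorem theorem5p8 (R : realType) (X : MetCH R) (g : bin_submetric X) :
  equivalence_submetric g <->
  ((forall (x y : mc_sort X) (i j : bool),
      mc_d X x y <= g (cpt x i) (cpt y j) /\
      g (cpt x i) (cpt y j) = g (cpt x (~~ i)) (cpt y (~~ j))) /\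
   (forall (x y : mc_sort X) (i : bool),
      g (cpt x i) (cpt y (~~ i)) =
      ereal_inf [set g (cpt x i) (cpt z (~~ i)) + g (cpt z i) (cpt y (~~ i))
                | z in [set: mc_sort X]])).
Proof.
split=> [[refl sym trans] | [d_le_swap cross_inf]].
- have d_le := corel_reflexive_le refl.
  have g_swap := corel_symmetric_swap sym.
  split=> [x y i j | ]; first by split; [exact: d_le | exact: g_swap].
  apply/(cross_infE g_swap) => x y; apply/eqP.
  by rewrite eq_le (adj_le_far d_le) (far_le_adj_of_transitive g_swap trans).
- have d_le x y i j := (d_le_swap x y i j).1.
  have g_swap x y i j := (d_le_swap x y i j).2.
  split; [exact: corel_reflexive_of_le | exact: corel_symmetric_of_swap |].
  exact: corel_transitive_of_adj_far g_swap ((cross_infE g_swap).1 cross_inf).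
Qed.
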